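(* Let $F$ be a finite subset of $\mathbb{Z}^k$ that tiles $\mathbb{Z}^k$, and let $D=(F-F)\setminus\{0\}$. Then $\mathrm{Md}_{\mathbb{Z}^k}(D)=1/|F|$.
   Context: $F$ tiles $\mathbb{Z}^k$ if there is $C\subset\mathbb{Z}^k$ with $\mathbb{Z}^k=\bigsqcup_{x\in C}(F+x)$ (disjoint union). For $E\subset\mathbb{Z}^k$: $\phi_E(S)=\max\{|A|:A\subset S,\ (A-A)\cap E=\emptyset\}$ for finite $S$, and $\mathrm{Md}_{\mathbb{Z}^k}(E)=\lim_N\phi_E(F_N)/|F_N|$ for any Følner sequence $(F_N)$ in $\mathbb{Z}^k$ (limit exists, independent of the sequence). *)

From HB Require Import structures.
From mathcomp Require Import all_boot all_order all_algebra.
From mathcomp Require Import finmap.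
From mathcomp Require Import all_classical all_reals all_analysis.
Set Implicit Arguments. Unset Strict Implicit. Unset Printing Implicit Defensive.
Import Order.TTheory GRing.Theory Num.Theory.
Import numFieldNormedType.Exports.

Local Open Scope ring_scope.
Local Open Scope classical_set_scope.
Local Open Scope fset_scope.

Notation Zk k := ('rV[int]_k).

(* F tiles Z^k: there is C ⊆ Z^k such that Z^k is the disjoint union of the
   translates F + c, c ∈ C, i.e. every z lies in F + c for exactly one c ∈ C. *)
Definition tiles (k : nat) (F : {fset Zk k}) : Prop :=
  exists C : Zk k -> Prop,
    forall z : Zk k, exists! c : Zk k, C c /\ (z - c)%R \in F.

Definition diffset (k : nat) (F : {fset Zk k}) : {fset Zk k} :=
  [fset (x - y)%R | x in F, y in F].

Definition E_free (k : nat) (E : Zk k -> Prop) (A : {fset Zk k}) : bool :=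
  `[< forall a b : Zk k, a \in A -> b \in A -> ~ E (a - b)%R >].

Definition phi (k : nat) (E : Zk k -> Prop) (S : {fset Zk k}) : nat :=
  \max_(A <- fpowerset S | E_free E A) #|` A|.

Definition translate (k : nat) (S : {fset Zk k}) (g : Zk k) : {fset Zk k} :=
  [fset (x + g)%R | x in S].

Definition Folner (R : realType) (k : nat) (FN : nat -> {fset Zk k}) : Prop :=
  (forall N, (0 < #|` FN N|)%N) /\
  forall g : Zk k,
    (fun N => ((#|` translate (FN N) g `\` FN N| + #|` FN N `\` translate (FN N) g|)%:R
               / (#|` FN N|)%:R : R)) @ \oo --> (0 : R).

(* The sequence phi_E(F_N)/|F_N| whose limit is Md_{Z^k}(E). *)
Definition Md_ratio (R : realType) (k : nat) (E : Zk k -> Prop)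
  (FN : nat -> {fset Zk k}) (N : nat) : R :=
  (phi E (FN N))%:R / (#|` FN N|)%:R.

From HB Require Import structures.
From mathcomp Require Import all_boot all_order all_algebra.
From mathcomp Require Import finmap.
From mathcomp Require Import all_classical all_reals all_analysis.
Import Order.TTheory GRing.Theory Num.Theory.
Import numFieldNormedType.Exports.
Local Open Scope classical_set_scope.
Local Open Scope fset_scope.
Local Open Scope ring_scope.

(* Let d(S) be the sum over f in F of the Følner defects |(S - f) Δ S|.
   If C is the set of centres of a tiling by F, then S ∩ C is D-free, and
   counting the points z - f (z in S, f in F) that lie in C gives
   |S| <= |F| phi_D(S) + d(S).  Conversely, the translates A + f, f in F, of a
   D-free set A ⊆ S are pairwise disjoint and lie in S up to d(S), so
   |F| phi_D(S) <= |S| + d(S).  Hence | |F| phi_D(F_N)/|F_N| - 1 | <= d(F_N)/|F_N|,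
   which tends to 0 along a Følner sequence. *)

Lemma mem_fsep {T : choiceType} (S : {fset T}) (P : pred T) x :
  (x \in [fset y in S | P y]) = (x \in S) && P x.
Proof. by rewrite inE. Qed.

Lemma card_fsepE {T : choiceType} (S : {fset T}) (P : pred T) :
  #|` [fset x in S | P x]| = (\sum_(x <- S) P x)%N.
Proof. by rewrite card_fset_sum1 -big_fset_condE big_mkcond. Qed.

Section FsetCounting.
Context {T : choiceType}.
Implicit Types (S : {fset T}) (P : pred T).

Lemma card_fsep_leq_fsetD S1 S2 P :
  (#|` [fset x in S1 | P x]| <= #|` [fset x in S2 | P x]| + #|` S1 `\` S2|)%N.
Proof.
apply: leq_trans (leq_card_fsetU _ _).1; apply: fsubset_leq_card.
apply/fsubsetP => x; rewrite !inE => /andP[xS1 Px].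
by rewrite xS1 Px andbT; case: (x \in S2).
Qed.

Lemma sum_card_fsep_exchange {U : choiceType} (X : {fset T}) (Y : {fset U})
    (P : T -> U -> bool) :
  (\sum_(x <- X) #|` [fset y in Y | P x y]|
   = \sum_(y <- Y) #|` [fset x in X | P x y]|)%N.
Proof.
under eq_bigr do rewrite card_fsepE.
by rewrite exchange_big; under [RHS]eq_bigr do rewrite card_fsepE.
Qed.

Lemma card_fsep_le1 S P :
  {in S &, forall x y, P x -> P y -> x = y} -> (#|` [fset x in S | P x]| <= 1)%N.
Proof.
move=> uniqP; have [->|[x]] := fset_0Vmem [fset x in S | P x]; first by rewrite cardfs0.
rewrite inE => /andP[xS Px]; rewrite -(cardfs1 x); apply: fsubset_leq_card.
apply/fsubsetP => y; rewrite !inE => /andP[yS Py].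
by rewrite (uniqP _ _ yS xS Py Px).
Qed.

End FsetCounting.

Section Translates.
Context {k : nat}.
Implicit Types (S : {fset Zk k}) (P : pred (Zk k)).

Definition folner_defect S (g : Zk k) : nat :=
  #|` translate S g `\` S| + #|` S `\` translate S g|.

Lemma mem_translate S g z : (z \in translate S g) = (z - g \in S).
Proof.
apply/imfsetP/idP => [[x xS ->]|zgS]; first by rewrite addrK.
by exists (z - g) => //; rewrite subrK.
Qed.

Lemma card_fsep_shift S g P :
  #|` [fset z in S | P (z - g)]| = #|` [fset y in translate S (- g) | P y]|.
Proof.
have -> : [fset y in translate S (- g) | P y]
          = [fset z - g | z in [fset z in S | P (z - g)]].
  apply/fsetP => y; apply/idP/imfsetP => [|[z] /=].
    rewrite mem_fsep mem_translate opprK => /andP[ygS Py].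
    by exists (y + g); rewrite ?addrK // mem_fsep ygS addrK.
  by rewrite !mem_fsep mem_translate opprK => /andP[zS Pz] ->; rewrite subrK zS.
by rewrite [RHS]card_in_imfset // => x y _ _ /addIr.
Qed.

Lemma card_fsep_translate_leq S g P :
  (#|` [fset y in translate S g | P y]|
     <= #|` [fset y in S | P y]| + folner_defect S g)%N.
Proof.
apply: leq_trans (card_fsep_leq_fsetD (translate S g) S P) _.
by rewrite leq_add2l leq_addr.
Qed.

Lemma card_fsep_leq_translate S g P :
  (#|` [fset y in S | P y]|
     <= #|` [fset y in translate S g | P y]| + folner_defect S g)%N.
Proof.
apply: leq_trans (card_fsep_leq_fsetD S (translate S g) P) _.
by rewrite leq_add2l leq_addl.
Qed.

End Translates.

Section DifferenceFreeSets.
Context {k : nat}.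
Implicit Types (S A F : {fset Zk k}) (E : Zk k -> Prop).

Lemma leq_card_phi E S A : A `<=` S -> E_free E A -> (#|` A| <= phi E S)%N.
Proof.
by move=> AS freeA; apply: (@leq_bigmax_seq _ _ (E_free E) (fun B => #|` B|) A) => //;
  rewrite fpowersetE.
Qed.

Lemma phi_leq E S m :
  (forall A, A `<=` S -> E_free E A -> (#|` A| <= m)%N) -> (phi E S <= m)%N.
Proof. by move=> bound; apply/bigmax_leqP_seq => A; rewrite fpowersetE; apply: bound. Qed.

Lemma mem_diffset F x y : x \in F -> y \in F -> x - y \in diffset F.
Proof. by move=> xF yF; apply/imfset2P; exists x => //; exists y. Qed.

Variable F : {fset Zk k}.
Local Notation D := (fun x => x \in diffset F `\ 0).

Lemma tile_centres_free (C : Zk k -> Prop) A :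
  (forall z, exists! c, C c /\ z - c \in F) -> {in A, forall a, C a} -> E_free D A.
Proof.
move=> tileC CA; apply/asboolP => a b aA bA.
rewrite !inE => /andP[ab_neq0 /imfset2P[x xF [y yF ab_eq]]].
(* a + y lies both in the tile of a and in the tile of b. *)
have [c [_ c_uniq]] := tileC (a + y).
have ca : c = a by apply: c_uniq; split; [exact: CA | rewrite addrC addKr].
have cb : c = b by apply: c_uniq; split; [exact: CA | rewrite addrAC ab_eq subrK].
by move: ab_neq0; rewrite -ca -cb subrr eqxx.
Qed.

Lemma free_translates_disjoint A z f g : E_free D A ->
  f \in F -> g \in F -> z - f \in A -> z - g \in A -> f = g.
Proof.
move=> /asboolP freeA fF gF zfA zgA; apply/eqP; rewrite eq_sym -subr_eq0.
apply/negPn/negP => gf_neq0; apply: (freeA _ _ zfA zgA).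
have -> : z - f - (z - g) = g - f by rewrite opprB addrC addrA subrK.
by rewrite !inE gf_neq0 mem_diffset.
Qed.

Lemma card_leq_phi_tile (C : Zk k -> Prop) S :
  (forall z, exists! c, C c /\ z - c \in F) ->
  (#|` S| <= #|` F| * phi D S + \sum_(f <- F) folner_defect S (- f))%N.
Proof.
move=> tileC; set A := [fset x in S | `[< C x >]].
have freeA : E_free D A.
  by apply: tile_centres_free tileC _ => x; rewrite inE => /andP[_ /asboolP].
have cover : (#|` S| <= \sum_(f <- F) #|` [fset z in S | `[< C (z - f)%R >]]|)%N.
  rewrite sum_card_fsep_exchange (card_fset_sum1 S) leq_sum // => z _.
  have [c [[Cc zcF] _]] := tileC z.
  rewrite cardfs_gt0; apply/fset0Pn; exists (z - c).
  by rewrite mem_fsep zcF subKr asboolT.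
apply: leq_trans cover _; rewrite (card_fset_sum1 F).
rewrite big_distrl /= -big_split /= leq_sum // => f _.
rewrite mul1n (card_fsep_shift S f (fun y => `[< C y >])).
apply: leq_trans (card_fsep_translate_leq _ _ _) _.
by rewrite leq_add2r leq_card_phi // fset_sub.
Qed.

Lemma phi_leq_card_tile S :
  (#|` F| * phi D S <= #|` S| + \sum_(f <- F) folner_defect S (- f))%N.
Proof.
have [->|F_gt0] := posnP #|` F|; first by rewrite mul0n.
rewrite mulnC -leq_divRL //; apply: phi_leq => A AS freeA; rewrite leq_divRL // mulnC.
have {1}-> : A = [fset y in S | y \in A].
  apply/fsetP => y; rewrite mem_fsep andbC.
  by case: (boolP (y \in A)) => // /(fsubsetP AS) ->.
rewrite (card_fset_sum1 F) big_distrl /=.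
apply: leq_trans (_ : (\sum_(f <- F) (#|` [fset z in S | (z - f)%R \in A]|
                                       + folner_defect S (- f)) <= _)%N).
  apply: leq_sum => f _.
  by rewrite mul1n (card_fsep_shift S f (mem A)) card_fsep_leq_translate.
rewrite big_split /= leq_add2r sum_card_fsep_exchange (card_fset_sum1 S).
rewrite leq_sum // => z _.
apply: card_fsep_le1 => f g fF gF; exact: free_translates_disjoint.
Qed.

End DifferenceFreeSets.

Section Limits.
Context {R : realFieldType}.

Lemma cvg_dist_le (u w : nat -> R) (l : R) :
  w @ \oo --> 0 -> (forall N, `|u N - l| <= w N) -> u @ \oo --> l.
Proof.
move=> w0 uw; apply: (squeeze_cvgr (f := fun N => l - w N) (h := fun N => l + w N)).
- by near=> N; rewrite -ler_distlC distrC uw.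
- by rewrite -[X in _ --> X]subr0; apply: cvgB => //; exact: cvg_cst.
- by rewrite -[X in _ --> X]addr0; apply: cvgD => //; exact: cvg_cst.
Unshelve. all: by end_near.
Qed.

Lemma cvg_sum0 {I : Type} (r : seq I) (u : I -> nat -> R) :
  (forall i, u i @ \oo --> 0) -> (fun N => \sum_(i <- r) u i N) @ \oo --> 0.
Proof.
move=> u0; rewrite -[X in _ --> X](@big1_eq R 0 +%R _ r xpredT).
by apply: cvg_big => //; exact: add_continuous.
Qed.

Lemma dist_scaled_ratio_le (a p s b : nat) : (0 < s)%N ->
  (a * p <= s + b)%N -> (s <= a * p + b)%N ->
  `|a%:R * (p%:R / s%:R) - 1| <= b%:R / s%:R :> R.
Proof.
move=> s_gt0 up lo; have s_neq0 : s%:R != 0 :> R by rewrite pnatr_eq0 -lt0n.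
have -> : a%:R * (p%:R / s%:R) - 1 = ((a * p)%:R - s%:R) / s%:R :> R.
  by rewrite mulrBl divff // natrM mulrA.
rewrite normrM [X in _ * X]ger0_norm ?invr_ge0 // ler_pM2r ?invr_gt0 ?ltr0n //.
by rewrite ler_distl lerBlDr -!natrD !ler_nat lo up.
Qed.

End Limits.

Theorem mainTheorem6 (R : realType) (k : nat) (F : {fset 'rV[int]_k}) :
  tiles F ->
  forall FN : nat -> {fset 'rV[int]_k},
    Folner R FN ->
    Md_ratio R (fun x => x \in diffset F `\ (0 : 'rV[int]_k)%R) FN @ \oo --> ((#|` F|)%:R^-1 : R).
Proof.
move=> [C tileC] FN [FN_gt0 folner].
set D := fun x => x \in diffset F `\ 0.
have F_neq0 : (#|` F|)%:R != 0 :> R.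
  have [c [[_ cF] _]] := tileC 0.
  by rewrite pnatr_eq0 -lt0n cardfs_gt0; apply/fset0Pn; exists (0 - c).
set W := fun N => \sum_(f <- F) ((folner_defect (FN N) (- f))%:R / (#|` FN N|)%:R : R).
have W0 : W @ \oo --> 0 by apply: cvg_sum0 => f; exact: folner.
have Md_scaled : (fun N => (#|` F|)%:R * Md_ratio R D FN N) @ \oo --> (1 : R).
  apply: cvg_dist_le W0 _ => N; rewrite /W -mulr_suml -natr_sum.
  apply: dist_scaled_ratio_le; first exact: FN_gt0.
    exact: phi_leq_card_tile.
  exact: card_leq_phi_tile tileC.
rewrite -[X in _ --> X]mulr1.
rewrite (_ : Md_ratio R D FN
             = fun N => (#|` F|)%:R^-1 * ((#|` F|)%:R * Md_ratio R D FN N)).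
  exact: cvgMl_tmp.
by apply/funext => N; rewrite mulKf.
Qed.
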